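(* Let $\lambda\in\mathfrak h_{\bar 0}^*\setminus\Lambda_{\mathbb Z}$. Then $\mathrm{sch}\,L(\lambda)=0$.
   Context: Let $\mathfrak g=\mathfrak q(n)$ be the queer Lie superalgebra with Cartan subalgebra $\mathfrak h=\mathfrak h_{\bar 0}\oplus\mathfrak h_{\bar 1}$, and $\{\delta_i\}$ the basis of $\mathfrak h_{\bar 0}^*$ dual to the diagonal matrix units. $\Lambda_{\mathbb Z}=\{\sum_i\lambda_i\delta_i\mid\lambda_i\in\mathbb Z\}$ is the set of integer weights. $L(\lambda)$ is the irreducible highest weight module (with respect to the standard Borel subalgebra) of highest weight $\lambda$, and $\mathrm{sch}\,M=\sum_\mu(\dim M_{\mu,\bar 0}-\dim M_{\mu,\bar 1})e^\mu$. *)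

From HB Require Import structures.
From mathcomp Require Import all_boot all_order all_algebra.
Set Implicit Arguments. Unset Strict Implicit. Unset Printing Implicit Defensive.
Import Order.TTheory GRing.Theory Num.Theory.
Local Open Scope ring_scope.

(* The queer Lie superalgebra q(n) has basis
     e_ij = [[E_ij, 0], [0, E_ij]]  (even),   f_ij = [[0, E_ij], [E_ij, 0]]  (odd),
   with super brackets
     [e_ij, e_kl] = d_jk e_il - d_li e_kj
     [e_ij, f_kl] = d_jk f_il - d_li f_kj
     [f_ij, f_kl] = d_jk e_il + d_li e_kj   (anticommutator). *)

(* Data of a q(n)-module structure on a super vector space V (possibly
   infinite dimensional): the parity involution [qpar] (V_0 = +1 eigenspace,
   V_1 = -1 eigenspace) and the actions of the basis elements e_ij, f_ij. *)
Record qmod (F : fieldType) (n : nat) (V : lmodType F) := QMod {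
  qpar : V -> V;
  qe : 'I_n -> 'I_n -> V -> V;
  qf : 'I_n -> 'I_n -> V -> V }.

Definition lin_map (F : fieldType) (V : lmodType F) (g : V -> V) :=
  forall (a : F) (u v : V), g (a *: u + v) = a *: g u + g v.

Record is_qmod (F : fieldType) (n : nat) (V : lmodType F) (M : qmod n V) : Prop := {
  qpar_lin : lin_map (qpar M);
  qe_lin : forall i j, lin_map (qe M i j);
  qf_lin : forall i j, lin_map (qf M i j);
  qpar_invol : forall v, qpar M (qpar M v) = v;
  qe_even : forall i j v, qe M i j (qpar M v) = qpar M (qe M i j v);
  qf_odd : forall i j v, qf M i j (qpar M v) = - qpar M (qf M i j v);
  br_ee : forall i j k l v,
    qe M i j (qe M k l v) - qe M k l (qe M i j v)
    = (j == k)%:R *: qe M i l v - (l == i)%:R *: qe M k j v;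
  br_ef : forall i j k l v,
    qe M i j (qf M k l v) - qf M k l (qe M i j v)
    = (j == k)%:R *: qf M i l v - (l == i)%:R *: qf M k j v;
  br_ff : forall i j k l v,
    qf M i j (qf M k l v) + qf M k l (qf M i j v)
    = (j == k)%:R *: qe M i l v + (l == i)%:R *: qe M k j v }.

Definition is_qsubmod (F : fieldType) (n : nat) (V : lmodType F) (M : qmod n V)
  (S : V -> Prop) : Prop :=
  [/\ S 0, (forall a u v, S u -> S v -> S (a *: u + v)),
      (forall v, S v -> S (qpar M v)),
      (forall i j v, S v -> S (qe M i j v)) &
      (forall i j v, S v -> S (qf M i j v))].

Definition qmod_simple (F : fieldType) (n : nat) (V : lmodType F) (M : qmod n V) :=
  (exists v : V, v != 0) /\
  forall S, is_qsubmod M S -> (forall v, S v -> v = 0) \/ (forall v, S v).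

(* weights are elements of h_0^* = F^n, mu <-> sum_i mu_i delta_i *)
Definition integral_weight (F : fieldType) (n : nat) (lam : 'I_n -> F) :=
  forall i, exists k : int, lam i = k%:~R.

(* highest weight vector for the standard Borel subalgebra:
   weight lam for h_0 and annihilated by n^+ = span{e_ij, f_ij | i < j} *)
Definition hw_vector (F : fieldType) (n : nat) (V : lmodType F) (M : qmod n V)
  (lam : 'I_n -> F) (v : V) :=
  [/\ v != 0, (forall i, qe M i i v = lam i *: v) &
      (forall i j : 'I_n, (i < j)%N -> qe M i j v = 0 /\ qf M i j v = 0)].

(* M_{mu, p}: vectors of weight mu and parity p (false = even, true = odd) *)
Definition weight_space_par (F : fieldType) (n : nat) (V : lmodType F) (M : qmod n V)
  (mu : 'I_n -> F) (p : bool) (v : V) : Prop :=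
  (forall i, qe M i i v = mu i *: v) /\ qpar M v = (if p then - v else v).

Definition has_dim (F : fieldType) (V : lmodType F) (S : V -> Prop) (d : nat) :=
  exists b : 'I_d -> V,
    [/\ forall i, S (b i),
        (forall c : 'I_d -> F, \sum_i c i *: b i = 0 -> forall i, c i = 0) &
        (forall v, S v -> exists c : 'I_d -> F, v = \sum_i c i *: b i)].

From HB Require Import structures.
From mathcomp Require Import all_boot all_order all_algebra.
From Stdlib Require Import Classical.
Set Implicit Arguments. Unset Strict Implicit. Unset Printing Implicit Defensive.
Import Order.TTheory GRing.Theory Num.Theory.
Local Open Scope ring_scope.

(* A highest weight vector v of L(lam) may be taken homogeneous for the parity.
   The vectors X f_{s_1 s_1} ... f_{s_k s_k} v, with s_1 < ... < s_k and X a word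
   in the lowering operators e_ij, f_ij (i > j), span a subspace containing v that
   the commutation relations make stable under q(n); it is therefore all of
   L(lam).  Hence every weight of L(lam) is lam plus an integral vector, and since
   lowering operators strictly increase sum_k k mu_k, every weight space is finite
   dimensional.  As some lam_i is not an integer, mu_i <> 0 for every weight mu;
   the odd operator f_ii squares to e_ii, which is the scalar mu_i on L(lam)_mu,
   so f_ii is an isomorphism between L(lam)_{mu,0} and L(lam)_{mu,1}. *)

Section LinMap.
Variables (F : fieldType) (V : lmodType F) (g : V -> V).
Hypothesis g_lin : lin_map g.

Lemma lin_map0 : g 0 = 0.
Proof.
have := g_lin 1 0 0; rewrite scaler0 add0r scale1r -{1}[g 0]addr0.
by move/addrI <-.
Qed.

Lemma lin_mapD u w : g (u + w) = g u + g w.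
Proof. by have := g_lin 1 u w; rewrite !scale1r. Qed.

Lemma lin_mapZ a u : g (a *: u) = a *: g u.
Proof. by have := g_lin a u 0; rewrite !addr0 lin_map0 addr0. Qed.

Lemma lin_mapN u : g (- u) = - g u.
Proof. by rewrite -scaleN1r lin_mapZ scaleN1r. Qed.

Lemma lin_mapB u w : g (u - w) = g u - g w.
Proof. by rewrite lin_mapD lin_mapN. Qed.

Lemma lin_map_sum (I : Type) (r : seq I) (P : pred I) (f : I -> V) :
  g (\sum_(i <- r | P i) f i) = \sum_(i <- r | P i) g (f i).
Proof. exact: (big_morph g lin_mapD lin_map0). Qed.

End LinMap.

Definition subspace (F : fieldType) (V : lmodType F) (S : V -> Prop) :=
  S 0 /\ forall a u w, S u -> S w -> S (a *: u + w).

Section Subspace.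
Variables (F : fieldType) (V : lmodType F) (S : V -> Prop).
Hypothesis S_sub : subspace S.

Lemma subspaceZ a u : S u -> S (a *: u).
Proof. by case: S_sub => S0 Scomb Su; rewrite -[_ *: _]addr0; apply: Scomb. Qed.

Lemma subspaceD u w : S u -> S w -> S (u + w).
Proof. by case: S_sub => _ Scomb Su Sw; rewrite -[u]scale1r; apply: Scomb. Qed.

Lemma subspaceB u w : S u -> S w -> S (u - w).
Proof. by move=> Su Sw; rewrite -scaleN1r; apply: subspaceD (subspaceZ _ _). Qed.

Lemma subspace_sum (I : Type) (r : seq I) (P : pred I) (f : I -> V) :
  (forall i, P i -> S (f i)) -> S (\sum_(i <- r | P i) f i).
Proof. by move=> Sf; apply: big_ind => //; [exact: S_sub.1 | exact: subspaceD]. Qed.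

End Subspace.

Section Span.
Variables (F : fieldType) (V : lmodType F) (I : Type) (ok : pred I) (b : I -> V).

Definition span_of (x : V) := exists L : seq (F * I),
  all (ok \o snd) L /\ x = \sum_(q <- L) q.1 *: b q.2.

Lemma span_of_subspace : subspace span_of.
Proof.
split; first by exists [::]; rewrite big_nil.
move=> a _ _ [L1 [ok1 ->]] [L2 [ok2 ->]].
exists ([seq (a * q.1, q.2) | q <- L1] ++ L2); split.
  by rewrite all_cat all_map ok2 andbT.
rewrite big_cat big_map scaler_sumr; congr (_ + _).
by apply: eq_bigr => q _; rewrite scalerA.
Qed.

Lemma span_of_gen i : ok i -> span_of (b i).
Proof. by move=> oki; exists [:: (1, i)]; rewrite /= oki big_seq1 scale1r. Qed.

Lemma span_of_lin_map (g : V -> V) : lin_map g ->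
  (forall i, ok i -> span_of (g (b i))) -> forall x, span_of x -> span_of (g x).
Proof.
move=> g_lin gb x [L [okL ->]]; rewrite (lin_map_sum g_lin).
have [span0 span_comb] := span_of_subspace.
elim: L okL => [|q L IH] /=; first by rewrite big_nil.
case/andP=> okq /IH span_L; rewrite big_cons (lin_mapZ g_lin).
exact: span_comb _ _ _ (gb _ okq) span_L.
Qed.

End Span.

Lemma span_of_sub (F : fieldType) (V : lmodType F) (I : Type) (ok ok' : pred I)
    (b : I -> V) x :
  (forall i, ok i -> ok' i) -> span_of ok b x -> span_of ok' b x.
Proof.
by move=> sub [L [okL ->]]; exists L; split=> //; apply: sub_all okL => q /sub.
Qed.

Section FiniteDimension.
Variables (F : fieldType) (V : lmodType F).
Implicit Types S T : V -> Prop.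

Lemma has_dim0 S : (forall x, S x -> x = 0) -> has_dim S 0.
Proof.
move=> S0; exists (fun _ => 0); split; [by case | by move=> c _ [] |].
by move=> x /S0 ->; exists (fun _ => 0); rewrite big_ord0.
Qed.

Definition extend_ord (T : Type) d (f : 'I_d -> T) (t : T) (i : 'I_d.+1) :=
  if unlift ord_max i is Some j then f j else t.

Lemma lift_max_widen d (j : 'I_d) : lift ord_max j = widen_ord (leqnSn d) j.
Proof. by apply: ord_inj; rewrite lift_max. Qed.

Lemma extend_ord_widen (T : Type) d (f : 'I_d -> T) t j :
  extend_ord f t (widen_ord (leqnSn d) j) = f j.
Proof. by rewrite /extend_ord -lift_max_widen liftK. Qed.

Lemma sum_extend_ord d (c : 'I_d.+1 -> F) (f : 'I_d -> V) t :
  \sum_i c i *: extend_ord f t i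
  = \sum_(j < d) c (widen_ord (leqnSn d) j) *: f j + c ord_max *: t.
Proof.
rewrite big_ord_recr /= /extend_ord unlift_none; congr (_ + _).
by apply: eq_bigr => j _; rewrite -/(extend_ord _ _ _) extend_ord_widen.
Qed.

Lemma has_dim_ext S S' d s : subspace S' -> (forall x, S' x -> S x) ->
  S s -> ~ S' s -> (forall x, S x -> exists k, S' (x - k *: s)) ->
  has_dim S' d -> has_dim S d.+1.
Proof.
move=> S'_sub S'S Ss S's Sdec [b [S'b b_free b_span]].
exists (extend_ord b s); split.
- by move=> i; rewrite /extend_ord; case: unlift => [j|] //; apply: S'S.
- move=> c; rewrite sum_extend_ord => sum0.
  have cmax0 : c ord_max = 0.
    have [// | cmax] := eqVneq (c ord_max) 0; case: S's.
    have -> : s = - (c ord_max)^-1 *: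
        \sum_(j < d) c (widen_ord (leqnSn d) j) *: b j.
      move/eqP: sum0; rewrite addr_eq0 => /eqP ->.
      by rewrite scalerN scaleNr opprK scalerA mulVf // scale1r.
    apply: (subspaceZ S'_sub); apply: (subspace_sum S'_sub) => j _.
    exact: (subspaceZ S'_sub).
  move: sum0; rewrite cmax0 scale0r addr0 => /b_free c0 i.
  by case: (unliftP ord_max i) => [j ->|->] //; rewrite lift_max_widen.
- move=> x /Sdec [k /b_span [e xE]].
  exists (extend_ord e k); rewrite sum_extend_ord.
  under eq_bigr do rewrite extend_ord_widen.
  by rewrite -xE /extend_ord unlift_none subrK.
Qed.

Lemma span_of_cons (I : eqType) (i : I) (r : seq I) (b : I -> V) x :
  span_of (fun j => j \in i :: r) b x ->
  exists c, span_of (fun j => j \in r) b (x - c *: b i).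
Proof.
have [span0 span_comb] := span_of_subspace (fun j => j \in r) b.
case=> L [+ ->]; elim: L => [|[a j] L IH] /=.
  by exists 0; rewrite big_nil scale0r subrr.
case/andP=> + /IH [c span_L]; rewrite big_cons /= inE.
case: (eqVneq j i) => [-> _ | _ /= jr].
  by exists (a + c); rewrite scalerDl opprD addrACA subrr add0r.
by exists c; rewrite -addrA; apply: span_comb span_L; apply: span_of_gen.
Qed.

Lemma has_dim_span (I : eqType) (r : seq I) (b : I -> V) S : subspace S ->
  (forall x, S x -> span_of (fun j => j \in r) b x) -> exists d, has_dim S d.
Proof.
elim: r S => [|i r IH] S S_sub S_span.
  by exists 0%N; apply: has_dim0 => x /S_span [[|q L] [//= _ ->]]; rewrite big_nil.
pose span_r := span_of (fun j => j \in r) b.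
have span_r_sub : subspace span_r := span_of_subspace _ _.
have [[s [Ss S's]] | S_r] := classic (exists s, S s /\ ~ span_r s); last first.
  by apply: IH => // x Sx; apply: NNPP => S'x; apply: S_r; exists x.
pose S' x := S x /\ span_r x.
have S'_sub : subspace S'.
  have [S0 Scomb] := S_sub; have [span0 span_comb] := span_r_sub.
  by split=> [|a u w [Su su] [Sw sw]]; split; auto.
have [d S'd] := IH S' S'_sub (fun x => @proj2 _ _).
exists d.+1; apply: (has_dim_ext S'_sub (fun x => @proj1 _ _) Ss) S'd => [[_ //] | x Sx].
have [c span_x] := span_of_cons (S_span x Sx).
have [a span_s] := span_of_cons (S_span s Ss).
have a0 : a != 0.
  by apply: contra_notN S's => /eqP a0; rewrite a0 scale0r subr0 in span_s.
exists (c / a); split.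
  by apply: (subspaceB S_sub); last apply: (subspaceZ S_sub).
have -> : x - c / a *: s = (x - c *: b i) - c / a *: (s - a *: b i).
  by rewrite scalerBr scalerA divfK // opprB addrA subrK.
by apply: (subspaceB span_r_sub); last apply: (subspaceZ span_r_sub).
Qed.

Lemma has_dim_transport S T (f : V -> V) (c : F) d : lin_map f -> c != 0 ->
  (forall x, S x -> T (f x)) -> (forall y, T y -> S (f y)) ->
  (forall x, S x -> f (f x) = c *: x) -> (forall y, T y -> f (f y) = c *: y) ->
  has_dim S d -> has_dim T d.
Proof.
move=> f_lin c0 fST fTS ffS ffT [b [Sb b_free b_span]].
exists (fun j => f (b j)); split.
- by move=> j; apply: fST.
- move=> e /(congr1 f); rewrite (lin_map_sum f_lin) (lin_map0 f_lin) => sum0 j.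
  have /b_free /(_ j) /eqP : \sum_j (e j * c) *: b j = 0.
    rewrite -[RHS]sum0; apply: eq_bigr => k _.
    by rewrite (lin_mapZ f_lin) ffS // scalerA.
  by rewrite mulf_eq0 (negbTE c0) orbF => /eqP.
- move=> y Ty; have [e fyE] := b_span _ (fTS _ Ty).
  exists (fun j => c^-1 * e j); apply: (scalerI c0).
  rewrite -ffT // fyE (lin_map_sum f_lin) scaler_sumr; apply: eq_bigr => j _.
  by rewrite (lin_mapZ f_lin) scalerA mulrA mulfV // mul1r.
Qed.

End FiniteDimension.

Fixpoint words (T : finType) (k : nat) : seq (seq T) :=
  if k is k'.+1 then [::] :: [seq a :: w | a <- enum T, w <- words T k']
  else [:: [::]].

Lemma mem_words (T : finType) k (w : seq T) : (size w <= k)%N -> w \in words T k.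
Proof.
elim: k w => [|k IH] [|a w] //=; rewrite ?inE ?eqxx // => size_w.
apply/orP; right; apply: (allpairs_f (fun a w => a :: w)).
  by rewrite mem_enum.
exact: IH.
Qed.

Lemma sorted_ord_size n (s : seq 'I_n) : sorted <%O s -> (size s <= n)%N.
Proof.
move/lt_sorted_uniq/card_uniqP <-.
by rewrite -[leqRHS]card_ord max_card.
Qed.

Lemma pchar0_natr_inj (F : fieldType) : [pchar F] =i pred0 ->
  injective (fun m : nat => m%:R : F).
Proof.
move=> F0 m k; wlog le_mk : m k / (m <= k)%N => [wlog_le | e].
  by case: (leqP m k) => [|/ltnW] le e; [|symmetry]; apply: wlog_le.
apply/eqP; rewrite eqn_leq le_mk /= -subn_eq0 -((pcharf0P F).1 F0).
by rewrite natrB // e subrr.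
Qed.

Section QueerModule.
Variables (F : fieldType) (n : nat) (V : lmodType F) (M : qmod n V).
Hypotheses (F_char0 : [pchar F] =i pred0) (hM : is_qmod M).

Definition letter := ('I_n * 'I_n * bool)%type.

Definition act (l : letter) : V -> V :=
  if l.2 then qf M l.1.1 l.1.2 else qe M l.1.1 l.1.2.

Lemma act_lin l : lin_map (act l).
Proof. by rewrite /act; case: l.2; [apply: qf_lin | apply: qe_lin]. Qed.

Lemma act_comm i j b k l c x :
  act (i, j, b) (act (k, l, c) x) =
  (-1) ^+ (b && c) *: act (k, l, c) (act (i, j, b) x)
  + (j == k)%:R *: act (i, l, b (+) c) x
  - ((-1) ^+ (b && c) * (l == i)%:R) *: act (k, j, b (+) c) x.
Proof.
rewrite /act /=; case: b; case: c => /=; rewrite ?expr1 ?expr0 ?mulN1r ?mul1r.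
- rewrite -[LHS](addrK (qf M k l (qf M i j x))) (br_ff hM) scaleN1r scaleNr opprK.
  by rewrite addrC addrA.
- by rewrite scale1r -[LHS](subKr (qe M k l (qf M i j x))) (br_ef hM) opprB addrA.
- by rewrite scale1r -[LHS](addrNK (qf M k l (qe M i j x))) (br_ef hM) addrC addrA.
- by rewrite scale1r -[LHS](addrNK (qe M k l (qe M i j x))) (br_ee hM) addrC addrA.
Qed.

Lemma qpar_act l y : qpar M (act l y) = (-1) ^+ l.2 *: act l (qpar M y).
Proof.
rewrite /act; case: l.2; last by rewrite expr0 scale1r (qe_even hM).
by rewrite (qf_odd hM) expr1 scaleN1r opprK.
Qed.

Lemma qf_diag_sqr a y : qf M a a (qf M a a y) = qe M a a y.
Proof.
have := br_ff hM a a a a y; rewrite eqxx scale1r -!mulr2n -!scaler_nat.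
by apply: scalerI; rewrite (pcharf0P F).1.
Qed.

Lemma qf_diag_anticomm a j y :
  a != j -> qf M j j (qf M a a y) = - qf M a a (qf M j j y).
Proof.
move=> ne_aj; have := br_ff hM j j a a y.
rewrite [j == a]eq_sym (negbTE ne_aj) !scale0r addr0 => /eqP.
by rewrite addr_eq0 => /eqP.
Qed.

Definition has_weight (nu : 'I_n -> F) (y : V) := forall k, qe M k k y = nu k *: y.

Definition shift (nu : 'I_n -> F) (i j : 'I_n) (k : 'I_n) :=
  nu k + (k == i)%:R - (k == j)%:R.

Definition eq_weight (nu mu : 'I_n -> F) := [forall k, nu k == mu k].

Lemma has_weight_subspace nu : subspace (has_weight nu).
Proof.
split=> [k | a u w hu hw k]; first by rewrite (lin_map0 (qe_lin hM k k)) scaler0.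
by rewrite (qe_lin hM) hu hw scalerDr !scalerA mulrC.
Qed.

Lemma has_weight_ext nu mu y :
  (forall k, nu k = mu k) -> has_weight nu y -> has_weight mu y.
Proof. by move=> e h k; rewrite h e. Qed.

Lemma act_weight nu y i j b :
  has_weight nu y -> has_weight (shift nu i j) (act (i, j, b) y).
Proof.
move=> hy k.
change (act (k, k, false) (act (i, j, b) y) = shift nu i j k *: act (i, j, b) y).
rewrite act_comm /= expr0 mul1r scale1r [act (k, k, false) y]/act /= hy.
rewrite (lin_mapZ (act_lin _)) /shift scalerBl scalerDl; congr (_ + _ - _).
  by case: (eqVneq k i) => [->|_]; rewrite ?mulr0n ?scale0r.
by rewrite eq_sym; case: (eqVneq k j) => [->|_]; rewrite ?mulr0n ?scale0r.
Qed.

Lemma weight_sum_eq0 (J : Type) (r : seq J) (P : pred J) (w : J -> 'I_n -> F)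
    (y : J -> V) nu y0 :
  has_weight nu y0 ->
  (forall j, P j -> has_weight (w j) (y j) /\ exists k, w j k != nu k) ->
  y0 + \sum_(j <- r | P j) y j = 0 -> y0 = 0.
Proof.
elim: r y y0 => [|j r IH] y y0 hy0 hy; first by rewrite big_nil addr0.
rewrite big_cons; case: ifP => Pj; last exact: IH.
have [hyj [k ne_k]] := hy j Pj.
(* e_kk - w j k kills y j and rescales the other weight vectors *)
pose h z := qe M k k z - w j k *: z.
have h_lin : lin_map h.
  move=> a u z; rewrite /h (qe_lin hM) scalerDr scalerA mulrC -scalerA.
  by rewrite opprD addrACA -scalerBr.
have hE mu z : has_weight mu z -> h z = (mu k - w j k) *: z.
  by move=> hz; rewrite /h hz scalerBl.
have hy' j' : P j' -> has_weight (w j') ((w j' k - w j k) *: y j') /\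
    exists k, w j' k != nu k.
  by case/hy=> hw ne; split=> //; apply: (subspaceZ (has_weight_subspace _)).
move/(congr1 h); rewrite (lin_map0 h_lin) !(lin_mapD h_lin) (lin_map_sum h_lin).
rewrite (hE _ _ hyj) subrr scale0r add0r (hE _ _ hy0).
under eq_bigr => j' Pj' do rewrite (hE _ _ (hy j' Pj').1).
move/(IH _ _ (subspaceZ (has_weight_subspace nu) _ hy0) hy')/eqP.
by rewrite scaler_eq0 subr_eq0 eq_sym (negbTE ne_k) => /eqP.
Qed.

Lemma span_of_weight (J : Type) (ok : pred J) (b : J -> V) (w : J -> 'I_n -> F)
    mu x :
  (forall j, has_weight (w j) (b j)) -> has_weight mu x -> span_of ok b x ->
  span_of (fun j => ok j && eq_weight (w j) mu) b x.
Proof.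
move=> hb hx [L [okL xE]].
exists [seq q <- L | eq_weight (w q.2) mu]; split.
  by rewrite all_filter; apply: sub_all okL => q /= ->; apply/implyP.
rewrite big_filter; set A := \sum_(q <- L | _) _.
have hA : has_weight mu A.
  apply: (subspace_sum (has_weight_subspace mu)) => q /forallP e.
  apply: (subspaceZ (has_weight_subspace mu)).
  by apply: has_weight_ext (hb q.2) => k; apply/eqP.
suff : A - x = 0 by move/eqP; rewrite subr_eq0 => /eqP.
apply: (weight_sum_eq0 (P := fun q => ~~ eq_weight (w q.2) mu) (w := fun q => w q.2)
  (y := fun q => q.1 *: b q.2) (r := L)).
- exact: (subspaceB (has_weight_subspace mu) hA hx).
- move=> q; rewrite negb_forall => /existsP [k ne_k]; split; last by exists k.
  exact: (subspaceZ (has_weight_subspace _) _ (hb q.2)).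
- rewrite xE (bigID (fun q => eq_weight (w q.2) mu)) /=.
  by rewrite opprD addrA subrr add0r addNr.
Qed.

Lemma weight_space_subspace mu p : subspace (weight_space_par M mu p).
Proof.
have [wt0 wt_comb] := has_weight_subspace mu; have qpar_l := qpar_lin hM.
split; first by split=> //; rewrite (lin_map0 qpar_l); case: p; rewrite ?oppr0.
move=> a u w [hu pu] [hw pw]; split; first exact: wt_comb.
by rewrite qpar_l pu pw {pu pw}; case: p; rewrite ?scalerN ?opprD.
Qed.

Lemma qf_diag_weight_space a mu p x :
  weight_space_par M mu p x -> weight_space_par M mu (~~ p) (qf M a a x).
Proof.
case=> hx px; split.
  by apply: has_weight_ext (act_weight a a true hx) => k; rewrite /shift addrK.
rewrite (qpar_act (a, a, true)) px {px} expr1 scaleN1r /act /=.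
by case: p; rewrite ?(lin_mapN (qf_lin hM a a)) ?opprK.
Qed.

Lemma qpar_stable_homogeneous (S : V -> Prop) v : subspace S ->
  (forall y, S y -> S (qpar M y)) -> S v -> v != 0 ->
  exists v' (eps : bool), [/\ S v', v' != 0 & qpar M v' = (-1) ^+ eps *: v'].
Proof.
move=> S_sub S_par Sv v_nz; have qpar_l := qpar_lin hM.
have two_nz : (2%:R : F) != 0 by rewrite (pcharf0P F).1.
pose v0 := 2%:R^-1 *: (v + qpar M v); pose v1 := 2%:R^-1 *: (v - qpar M v).
have vE : v = v0 + v1.
  by rewrite -scalerDr addrACA subrr addr0 -mulr2n -scaler_nat scalerA mulVf // scale1r.
have [v0_0 | v0_nz] := eqVneq v0 0.
  exists v1, true; split.
  - by apply: (subspaceZ S_sub); apply: (subspaceB S_sub) (S_par _ Sv).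
  - by move: v_nz; rewrite vE v0_0 add0r.
  - rewrite expr1 scaleN1r (lin_mapZ qpar_l) (lin_mapB qpar_l) (qpar_invol hM).
    by rewrite -scalerN opprB.
exists v0, false; split=> //.
- by apply: (subspaceZ S_sub); apply: (subspaceD S_sub) (S_par _ Sv).
- by rewrite expr0 scale1r (lin_mapZ qpar_l) (lin_mapD qpar_l) (qpar_invol hM) addrC.
Qed.

Lemma hw_vector_homogeneous lam v : hw_vector M lam v ->
  exists v' (eps : bool), hw_vector M lam v' /\ qpar M v' = (-1) ^+ eps *: v'.
Proof.
case=> v_nz v_wt v_hw.
pose S y := has_weight lam y /\
  forall i j : 'I_n, (i < j)%N -> qe M i j y = 0 /\ qf M i j y = 0.
have S_sub : subspace S.
  have [wt0 wt_comb] := has_weight_subspace lam.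
  split=> [|a u w [hu ru] [hw rw]].
    by split=> // i j _; rewrite (lin_map0 (qe_lin hM i j)) (lin_map0 (qf_lin hM i j)).
  split=> [|i j lt_ij]; first exact: wt_comb.
  have [eu fu] := ru i j lt_ij; have [ew fw] := rw i j lt_ij.
  by rewrite (qe_lin hM) (qf_lin hM) eu fu ew fw scaler0 addr0.
have S_par y : S y -> S (qpar M y).
  case=> hy ry; split=> [k | i j lt_ij].
    by rewrite (qe_even hM) hy (lin_mapZ (qpar_lin hM)).
  have [ey fy] := ry i j lt_ij.
  by rewrite (qe_even hM) (qf_odd hM) ey fy (lin_map0 (qpar_lin hM)) oppr0.
have [v' [eps [[v'_wt v'_hw] v'_nz v'_par]]] :=
  qpar_stable_homogeneous S_sub S_par (conj v_wt v_hw) v_nz.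
by exists v', eps; split.
Qed.

Section HighestWeight.
Variables (lam : 'I_n -> F) (v : V) (eps : bool).
Hypotheses (hv : hw_vector M lam v) (v_par : qpar M v = (-1) ^+ eps *: v)
  (M_simple : qmod_simple M).

Definition fdiag (s : seq 'I_n) := foldr (fun i => qf M i i) v s.

Definition monomial := (seq letter * seq 'I_n)%type.
Definition mon (p : monomial) := foldr act (fdiag p.2) p.1.
Definition lowering (l : letter) := (l.1.2 < l.1.1)%N.
Definition ordered (p : monomial) := all lowering p.1 && sorted <%O p.2.
Definition mon_span := span_of ordered mon.

Lemma fdiag_weight s : has_weight lam (fdiag s).
Proof.
case: hv => _ v_wt _; elim: s => [|a s IH] //=.
by apply: has_weight_ext (act_weight a a true IH) => k; rewrite /shift addrK.
Qed.

Lemma fdiag_raise s (i j : 'I_n) b : (i < j)%N -> act (i, j, b) (fdiag s) = 0.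
Proof.
case: hv => _ _ v_hw; elim: s i j b => [|a s IH] i j b lt_ij.
  by rewrite /act; case: b; case: (v_hw i j lt_ij).
change (act (i, j, b) (act (a, a, true) (fdiag s)) = 0).
rewrite act_comm IH // (lin_map0 (act_lin _)) scaler0 add0r.
have -> : (j == a)%:R *: act (i, a, b (+) true) (fdiag s) = 0.
  by case: eqP => [<- | _]; [rewrite IH // scaler0 | rewrite scale0r].
rewrite -scalerA; have -> : (a == i)%:R *: act (a, j, b (+) true) (fdiag s) = 0.
  by case: eqP => [-> | _]; [rewrite IH // scaler0 | rewrite scale0r].
by rewrite scaler0 subr0.
Qed.

Lemma fdiag_sort s j : sorted <%O s -> exists c s',
  [/\ sorted <%O s', {subset s' <= j :: s} & qf M j j (fdiag s) = c *: fdiag s'].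
Proof.
elim: s => [|a s IH] sorted_as; first by exists 1, [:: j]; split; rewrite ?scale1r.
move: (sorted_as); rewrite /= (path_sortedE lt_trans) => /andP [lt_a_s sorted_s].
case: (ltgtP j a) => [lt_ja | lt_aj | ->].
- by exists 1, [:: j, a & s]; split; rewrite ?scale1r //= lt_ja.
- have [c [s' [sorted_s' sub_s' fE]]] := IH sorted_s.
  exists (- c), (a :: s'); split.
  + rewrite /= (path_sortedE lt_trans) sorted_s' andbT; apply/allP => x /sub_s'.
    by rewrite inE => /predU1P [-> // | /(allP lt_a_s)].
  + move=> x; rewrite !inE => /predU1P [-> | /sub_s']; first by rewrite eqxx orbT.
    by rewrite inE => /predU1P [-> | ->]; rewrite ?eqxx ?orbT.
  + rewrite /= qf_diag_anticomm ?fE ?(lin_mapZ (qf_lin hM a a)) ?scaleNr //.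
    exact: (negbT (lt_eqF lt_aj)).
- exists (lam a), s; split=> //; first by move=> x xs; rewrite !inE xs !orbT.
  by rewrite /= qf_diag_sqr fdiag_weight.
Qed.

Let mon_span_sub := span_of_subspace ordered mon.

Lemma mon_span_lowering l x : lowering l -> mon_span x -> mon_span (act l x).
Proof.
move=> low_l; apply: span_of_lin_map (act_lin l) _ x => -[ys s] ok_p.
by apply: (@span_of_gen _ _ _ ordered mon (l :: ys, s)); rewrite /ordered /= low_l.
Qed.

Lemma mon_span_fdiag s : sorted <%O s -> mon_span (fdiag s).
Proof. by move=> sorted_s; apply: (@span_of_gen _ _ _ ordered mon ([::], s)). Qed.

Lemma mon_span_act_mon l p : ordered p -> mon_span (act l (mon p)).
Proof.
case: p => ys s /andP [/= low_ys sorted_s].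
elim: ys low_ys l => [_ | l' ys IH /andP [low_l' /IH {}IH]] [[i j] b].
  case: (ltngtP i j) => [lt_ij | lt_ji | /val_inj eq_ij]; rewrite /mon /=.
  - by rewrite fdiag_raise //; apply: mon_span_sub.1.
  - by apply: mon_span_lowering => //; apply: mon_span_fdiag.
  - rewrite -{}eq_ij /act; case: b => /=.
      have [c [s' [sorted_s' _ ->]]] := fdiag_sort i sorted_s.
      by apply: (subspaceZ mon_span_sub); apply: mon_span_fdiag.
    by rewrite fdiag_weight; apply: (subspaceZ mon_span_sub); apply: mon_span_fdiag.
case: l' low_l' => [[k q] c] low_l'; rewrite /mon /= act_comm.
apply: (subspaceB mon_span_sub); first apply: (subspaceD mon_span_sub).
all: apply: (subspaceZ mon_span_sub); try exact: IH.
exact: mon_span_lowering.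
Qed.

Lemma mon_par p : exists c, qpar M (mon p) = c *: mon p.
Proof.
case: p => ys s; elim: ys => [|l ys [c IH]].
  elim: s => [|a s [c IH]]; first by exists ((-1) ^+ eps).
  exists (- c).
  change (qpar M (act (a, a, true) (fdiag s)) = - c *: act (a, a, true) (fdiag s)).
  by rewrite qpar_act IH (lin_mapZ (act_lin _)) scalerA mulN1r.
exists ((-1) ^+ l.2 * c).
change (qpar M (act l (mon (ys, s))) = (-1) ^+ l.2 * c *: act l (mon (ys, s))).
by rewrite qpar_act IH (lin_mapZ (act_lin _)) scalerA.
Qed.

Lemma mon_span_qsubmod : is_qsubmod M mon_span.
Proof.
have [span0 span_comb] := mon_span_sub.
have act_closed l : forall x, mon_span x -> mon_span (act l x).
  by apply: span_of_lin_map (act_lin l) _ => p; apply: mon_span_act_mon.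
split=> //; last by move=> i j; apply: (act_closed (i, j, true)).
  apply: span_of_lin_map (qpar_lin hM) _ => p ok_p; have [c ->] := mon_par p.
  by apply: (subspaceZ mon_span_sub); apply: span_of_gen.
by move=> i j; apply: (act_closed (i, j, false)).
Qed.

Lemma mon_span_all x : mon_span x.
Proof.
case: M_simple => _ /(_ _ mon_span_qsubmod) [span_0 | //].
case: hv => v_nz _ _; move: v_nz.
by rewrite (span_0 v) ?eqxx //; apply: (mon_span_fdiag (s := [::])).
Qed.

Definition word_weight (ys : seq letter) := foldr (fun l nu => shift nu l.1.1 l.1.2) lam ys.

Lemma mon_weight p : has_weight (word_weight p.1) (mon p).
Proof.
case: p => ys s; elim: ys => [|[[i j] b] ys IH]; first exact: fdiag_weight.
exact: act_weight.
Qed.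

Lemma word_weight_integral ys k : exists z : int, word_weight ys k = lam k + z%:~R.
Proof.
elim: ys => [|[[i j] b] ys [z IH]]; first by exists 0; rewrite addr0.
by exists (z + (k == i)%:Z - (k == j)%:Z); rewrite /= /shift IH intrB intrD !addrA.
Qed.

(* Lowering letters raise the grade, which bounds the length of words of a given weight. *)
Definition grade (nu : 'I_n -> F) := \sum_k (val k)%:R * nu k.

Lemma grade_shift nu i j : grade (shift nu i j) = grade nu + (val i)%:R - (val j)%:R.
Proof.
have grade_delta (a : 'I_n) : \sum_k (val k)%:R * (k == a)%:R = (val a)%:R :> F.
  rewrite (bigD1 a) //= eqxx mulr1 big1 ?addr0 // => k /negbTE ->.
  by rewrite mulr0.
rewrite /grade -grade_delta -(grade_delta j) -big_split -sumrB.
by apply: eq_bigr => k _; rewrite /shift mulrBr mulrDr.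
Qed.

Lemma grade_word_weight ys : all lowering ys ->
  exists K, (size ys <= K)%N /\ grade (word_weight ys) = grade lam + K%:R.
Proof.
elim: ys => [|[[i j] b] ys IH] /=; first by exists 0%N; rewrite addr0.
case/andP=> /= lt_ji /IH [K [le_K gE]]; exists (K + (i - j))%N; split.
  by rewrite -addn1 leq_add // subn_gt0.
by rewrite grade_shift gE natrD natrB ?(ltnW lt_ji) // !addrA.
Qed.

Lemma lowering_size_bounded mu : exists K, forall ys,
  all lowering ys -> eq_weight (word_weight ys) mu -> (size ys <= K)%N.
Proof.
have [[ys0 [low0 e0]] | none] :=
  classic (exists ys, all lowering ys /\ eq_weight (word_weight ys) mu); last first.
  by exists 0%N => ys low e; case: none; exists ys.
have [K0 [_ gE0]] := grade_word_weight low0; exists K0 => ys low e.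
have [K [le_K gE]] := grade_word_weight low; suff -> : K0 = K by [].
apply: (pchar0_natr_inj F_char0); apply: (addrI (grade lam)); rewrite -gE -gE0.
by apply: eq_bigr => k _; rewrite (eqP (forallP e k)) (eqP (forallP e0 k)).
Qed.

Lemma mon_span_weight mu x : has_weight mu x ->
  span_of (fun p => ordered p && eq_weight (word_weight p.1) mu) mon x.
Proof. by move=> hx; apply: span_of_weight mon_weight hx (mon_span_all x). Qed.

Lemma weight_space_findim mu p : exists d, has_dim (weight_space_par M mu p) d.
Proof.
have [K size_le_K] := lowering_size_bounded mu.
pose r : seq monomial := [seq (ys, s) | ys <- words _ K, s <- words _ n].
apply: (has_dim_span (r := r) (b := mon) (weight_space_subspace mu p)) => x [hx _].
apply: span_of_sub (mon_span_weight hx) => -[ys s] /andP [/andP [low sorted_s] e].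
by apply: allpairs_f; apply: mem_words; [exact: size_le_K | exact: sorted_ord_size].
Qed.

Lemma weight_space_nonintegral i0 mu x : ~ (exists z : int, lam i0 = z%:~R) ->
  mu i0 = 0 -> has_weight mu x -> x = 0.
Proof.
move=> lam_i0 mu_i0 /mon_span_weight [L [okL ->]].
rewrite big_seq big1 // => q /(allP okL) /andP [_ /forallP /(_ i0) /eqP].
have [z ->] := word_weight_integral q.2.1 i0; rewrite mu_i0 => /eqP.
by rewrite addr_eq0 -intrN => /eqP lamE; case: lam_i0; exists (- z).
Qed.

Lemma sdim_weight_space (lam_nonint : ~ integral_weight lam) mu : exists d,
  has_dim (weight_space_par M mu false) d /\ has_dim (weight_space_par M mu true) d.
Proof.
have [i0 lam_i0] : exists i0, ~ exists z : int, lam i0 = z%:~R.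
  by apply: NNPP => none; apply: lam_nonint => i; apply: NNPP => ni; apply: none; exists i.
have [mu_i0 | mu_i0] := eqVneq (mu i0) 0.
  by exists 0%N; split; apply: has_dim0 => x [hx _];
    apply: weight_space_nonintegral lam_i0 mu_i0 hx.
have [d S0d] := weight_space_findim mu false; exists d; split=> //.
apply: (has_dim_transport (qf_lin hM i0 i0) mu_i0) S0d;
  try exact: qf_diag_weight_space.
all: by move=> x [hx _]; rewrite qf_diag_sqr hx.
Qed.

End HighestWeight.

End QueerModule.

Theorem corollary3p3 (F : closedFieldType) (hF : [pchar F] =i pred0)
  (n : nat) (V : lmodType F) (M : qmod n V) (hM : is_qmod M)
  (hsimple : qmod_simple M) (lam : 'I_n -> F)
  (hlam : ~ integral_weight lam) (hhw : exists v, hw_vector M lam v) :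
  forall mu : 'I_n -> F, exists d : nat,
    has_dim (weight_space_par M mu false) d /\
    has_dim (weight_space_par M mu true) d.
Proof.
move=> mu; have [v hv] := hhw.
have [v' [eps [hv' v'_par]]] := hw_vector_homogeneous hF hM hv.
exact: (sdim_weight_space hF hM hv' v'_par hsimple hlam).
Qed.
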